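(* Assume (V1), (V2), and that $\bar\rho$ satisfies (InBV). Then for every $n\in\mathbb{N}$ and all $t\ge0$, $$\mathrm{TV}[\hat\rho^n(t)]=\mathrm{TV}[\check\rho^n(t)]\le\mathrm{TV}[\bar\rho].$$
   Context: (V1): $v\in C^1([0,\infty))$ strictly decreasing; (V2): $v(0)=v_{\max}\in\mathbb{R}$. $\mathcal{M}_L$: nonnegative compactly supported Radon measures on $\mathbb{R}$ of mass $L>0$. (InBV): $\bar\rho\in\mathcal{M}_L\cap L^\infty(\mathbb{R})\cap BV(\mathbb{R})$. $\bar x_{\min}:=\min\mathrm{supp}\,\bar\rho$. For $n\in\mathbb{N}$: $N_n=2^n$, $\ell_n=2^{-n}L$, $\bar x^n_0=\bar x_{\min}$, $\bar x^n_i=\sup\{x:\int_{\bar x^n_{i-1}}^x\bar\rho<\ell_n\}$; $(x^n_i(t))$ solves $\dot x^n_{N_n}=v_{\max}$, $\dot x^n_i=v(\ell_n/(x^n_{i+1}-x^n_i))$, $x^n_i(0)=\bar x^n_i$; $y^n_i:=\ell_n/(x^n_{i+1}-x^n_i)$. $\hat\rho^n(t,x):=\sum_{i=0}^{N_n-1}y^n_i(t)\chi_{[x^n_i(t),x^n_{i+1}(t))}(x)$ (as a function on $\mathbb{R}$, zero outside $[x^n_0,x^n_{N_n})$), $\check\rho^n(t,z):=\sum_{i=0}^{N_n-1}y^n_i(t)\chi_{[i\ell_n,(i+1)\ell_n)}(z)$. TV denotes total variation on the whole line (for $\check\rho^n$, counting jumps at the endpoints as for $\hat\rho^n$, i.e.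 $y_0+y_{N_n-1}+\sum|y_i-y_{i+1}|$). *)

From Stdlib Require Import Reals Lra Lia Classical ClassicalEpsilon.
Open Scope R_scope.

(* RInt f a b = Stdlib RiemannInt (signed: RInt f a b = - RInt f b a) whenever
   f is Riemann integrable between a and b; 0 otherwise (never used for the
   BV data of the theorem, which are Riemann integrable on compacts). *)
Definition RInt (f : R -> R) (a b : R) : R :=
  match excluded_middle_informative
          (exists pr : Riemann_integrable f a b, True) with
  | left H => RiemannInt (proj1_sig (constructive_indefinite_description _ H))
  | right _ => 0
  end.

Fixpoint vsum (f : R -> R) (p : nat -> R) (k : nat) : R :=
  match k with
  | O => 0
  | S k' => vsum f p k' + Rabs (f (p (S k')) - f (p k'))
  end.

Definition var_sums (f : R -> R) : R -> Prop :=
  fun s => exists (p : nat -> R) (k : nat),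
    (forall j, (j < k)%nat -> p j < p (S j)) /\ s = vsum f p k.

Lemma var_sums_nonempty (f : R -> R) : exists s, var_sums f s.
Proof.
  exists 0, (fun _ => 0), O. split; [intros j Hj; lia | reflexivity].
Qed.

Definition has_BV (f : R -> R) : Prop := bound (var_sums f).

(* TV f = sup of the variation sums (0 if unbounded; not used in that case) *)
Definition TV (f : R -> R) : R :=
  match excluded_middle_informative (has_BV f) with
  | left H => proj1_sig (completeness (var_sums f) H (var_sums_nonempty f))
  | right _ => 0
  end.

(* (V1): v in C^1([0,oo)) (one-sided derivative at 0) and strictly decreasing there *)
Definition C1_nonneg (v : R -> R) : Prop :=
  exists dv : R -> R,
    (forall x, 0 < x -> derivable_pt_lim v x (dv x)) /\
    (forall eps, 0 < eps -> exists delta, 0 < delta /\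
        forall h, 0 < h < delta -> Rabs ((v h - v 0) / h - dv 0) < eps) /\
    (forall x eps, 0 <= x -> 0 < eps -> exists delta, 0 < delta /\
        forall y, 0 <= y -> Rabs (y - x) < delta -> Rabs (dv y - dv x) < eps).

Definition strictly_decreasing_nonneg (v : R -> R) : Prop :=
  forall a b, 0 <= a -> a < b -> v b < v a.

Definition Nn (n : nat) : nat := Nat.pow 2 n.
Definition elln (L : R) (n : nat) : R := L / 2 ^ n.

Definition in_supp (rho : R -> R) (x : R) : Prop :=
  forall eps, 0 < eps -> 0 < RInt rho (x - eps) (x + eps).

Definition initial_points (rho : R -> R) (ell : R) (N : nat) (xb : nat -> R) : Prop :=
  (in_supp rho (xb O) /\ forall y, in_supp rho y -> xb O <= y) /\
  (forall i, (1 <= i <= N)%nat ->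
     is_lub (fun x => RInt rho (xb (i - 1)%nat) x < ell) (xb i)).

(* classical solution on [0,oo) of the follow-the-leader system,
   with positive gaps (so that y_i = ell/(x_{i+1}-x_i) is defined) *)
Definition FTL_solution (v : R -> R) (vmax ell : R) (N : nat)
    (xb : nat -> R) (x : nat -> R -> R) : Prop :=
  forall i, (i <= N)%nat ->
    x i 0 = xb i /\
    (forall eps, 0 < eps -> exists delta, 0 < delta /\
        forall t, 0 <= t < delta -> Rabs (x i t - x i 0) < eps) /\
    (forall t, 0 < t ->
       derivable_pt_lim (x i) t
         (if Nat.eq_dec i N then vmax else v (ell / (x (S i) t - x i t)))) /\
    ((i < N)%nat -> forall t, 0 <= t -> x i t < x (S i) t).

Definition ychi (a b z : R) : R :=
  if Rle_dec a z then (if Rlt_dec z b then 1 else 0) else 0.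

Definition yi (ell : R) (x : nat -> R -> R) (i : nat) (t : R) : R :=
  ell / (x (S i) t - x i t).

Fixpoint sum_lt (N : nat) (g : nat -> R) : R :=
  match N with O => 0 | S k => sum_lt k g + g k end.

Definition rho_hat (ell : R) (N : nat) (x : nat -> R -> R) (t : R) : R -> R :=
  fun z => sum_lt N (fun i => yi ell x i t * ychi (x i t) (x (S i) t) z).

Definition rho_check (ell : R) (N : nat) (x : nat -> R -> R) (t : R) : R -> R :=
  fun z => sum_lt N (fun i => yi ell x i t * ychi (INR i * ell) (INR (S i) * ell) z).

From Stdlib Require Import Reals Lra Lia Classical ClassicalEpsilon FunctionalExtensionality.
Open Scope R_scope.

(* Both densities are step functions taking the values y_0(t), ..., y_(N-1)(t) on
   consecutive intervals, so an increasing piecewise-affine change of variable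
   identifies their total variations, and both are bounded by the discrete variation
   of 0, y_0(t), ..., y_(N-1)(t), 0.  Along the follow-the-leader flow, y_i moves
   towards its neighbour y_(i+1) (v is decreasing), so local maxima of the sequence
   decrease and local minima increase; summation by parts turns this into a
   nonpositive upper right Dini derivative of the discrete variation, which is
   therefore nonincreasing.  At t = 0 each y_i is the mean of rho over
   [x_i, x_(i+1)], hence lies between values of rho at two points of that cell, and
   a variation sum of rho through such points bounds the discrete variation. *)

(** * Total variation *)

Lemma TV_is_lub f : has_BV f -> is_lub (var_sums f) (TV f).
Proof.
  intro Hf. unfold TV. destruct (excluded_middle_informative (has_BV f)) as [H|H].
  - exact (proj2_sig (completeness _ H (var_sums_nonempty f))).
  - contradiction.
Qed.

Lemma TV_le_of_var_sums_le f B : (forall s, var_sums f s -> s <= B) -> TV f <= B.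
Proof. intro H. apply (TV_is_lub f); [exists B|]; exact H. Qed.

Lemma var_sums_le_TV f s : has_BV f -> var_sums f s -> s <= TV f.
Proof. intros Hf Hs. exact (proj1 (TV_is_lub f Hf) s Hs). Qed.

Lemma TV_eq_of_var_sums_iff f g :
  (forall s, var_sums f s <-> var_sums g s) -> TV f = TV g.
Proof.
  intro H. destruct (classic (has_BV f)) as [Hf|Hf].
  - assert (Hg : has_BV g) by (destruct Hf as [B HB]; exists B; intros s Hs; apply HB, H, Hs).
    apply (is_lub_u (var_sums f)); [apply TV_is_lub, Hf|].
    destruct (TV_is_lub g Hg) as [Hu Hl]. split.
    + intros s Hs. apply Hu, H, Hs.
    + intros b Hb. apply Hl. intros s Hs. apply Hb, H, Hs.
  - assert (Hg : ~ has_BV g) by (intros [B HB]; apply Hf; exists B; intros s Hs; apply HB, H, Hs).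
    unfold TV. destruct (excluded_middle_informative (has_BV f)); [contradiction|].
    destruct (excluded_middle_informative (has_BV g)); [contradiction|reflexivity].
Qed.

Definition strictly_increasing (phi : R -> R) : Prop := forall a b, a < b -> phi a < phi b.

Lemma strictly_increasing_le phi a b : strictly_increasing phi -> a <= b -> phi a <= phi b.
Proof. intros H [h|<-]; [left; apply H, h|right; reflexivity]. Qed.

Lemma var_sums_comp f phi s :
  strictly_increasing phi -> var_sums (fun z => f (phi z)) s -> var_sums f s.
Proof.
  intros Hphi [p [k [Hp ->]]]. exists (fun j => phi (p j)), k. split.
  - intros j Hj. apply Hphi, Hp, Hj.
  - induction k as [|k IH]; simpl; [reflexivity|]. rewrite IH; [reflexivity|].
    intros j Hj. apply Hp. lia.
Qed.

Lemma TV_eq_of_reparam f g phi psi :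
  strictly_increasing phi -> strictly_increasing psi ->
  (forall z, f (phi z) = g z) -> (forall z, g (psi z) = f z) -> TV f = TV g.
Proof.
  intros Hphi Hpsi Hfg Hgf. apply TV_eq_of_var_sums_iff. intro s. split; intro Hs.
  - apply (var_sums_comp g psi s Hpsi).
    replace (fun z => g (psi z)) with f by (extensionality z; symmetry; apply Hgf). exact Hs.
  - apply (var_sums_comp f phi s Hphi).
    replace (fun z => f (phi z)) with g by (extensionality z; symmetry; apply Hfg). exact Hs.
Qed.

Lemma sum_lt_ext N f g : (forall i, (i < N)%nat -> f i = g i) -> sum_lt N f = sum_lt N g.
Proof.
  induction N as [|N IH]; intro H; simpl; [reflexivity|].
  rewrite IH, H; [reflexivity|lia|intros; apply H; lia].
Qed.

Definition increasing_nodes (N : nat) (c : nat -> R) : Prop :=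
  forall i, (i < N)%nat -> c i < c (S i).

Lemma increasing_nodes_le N c i j :
  increasing_nodes N c -> (i <= j <= N)%nat -> c i <= c j.
Proof.
  intros Hc [Hij HjN]. induction Hij as [|j Hij IH]; [lra|].
  pose proof (IH ltac:(lia)). pose proof (Hc j ltac:(lia)). lra.
Qed.

Lemma Rabs_sub_triang a b c : Rabs (a - c) <= Rabs (a - b) + Rabs (b - c).
Proof. replace (a - c) with ((a - b) + (b - c)) by ring. apply Rabs_triang. Qed.

Lemma Rabs_le_bounds x y : Rabs x <= y -> - y <= x <= y.
Proof. unfold Rabs. destruct Rcase_abs; lra. Qed.

Definition seq_var (w : nat -> R) (j : nat) : R := sum_lt j (fun r => Rabs (w (S r) - w r)).

Lemma seq_var_S w j : seq_var w (S j) = seq_var w j + Rabs (w (S j) - w j).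
Proof. reflexivity. Qed.

Lemma seq_var_ge_dist w a b : (a <= b)%nat -> Rabs (w b - w a) <= seq_var w b - seq_var w a.
Proof.
  induction 1 as [|b Hab IH].
  - rewrite Rminus_diag, Rabs_R0. lra.
  - rewrite seq_var_S. pose proof (Rabs_sub_triang (w (S b)) (w b) (w a)). lra.
Qed.

Lemma seq_var_le w a b : (a <= b)%nat -> seq_var w a <= seq_var w b.
Proof. intro H. pose proof (seq_var_ge_dist w a b H). pose proof (Rabs_pos (w b - w a)). lra. Qed.

Lemma seq_var_perturb w w' eps K : (forall j, Rabs (w' j - w j) <= eps) ->
  seq_var w K - 2 * eps * INR K <= seq_var w' K.
Proof.
  intro H. induction K as [|K IH]; [unfold seq_var; simpl; lra|].
  rewrite !seq_var_S, S_INR.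
  pose proof (H K). pose proof (H (S K)) as hS. rewrite Rabs_minus_sym in hS.
  pose proof (Rabs_sub_triang (w (S K)) (w' (S K)) (w K)).
  pose proof (Rabs_sub_triang (w' (S K)) (w' K) (w K)).
  lra.
Qed.

(* The zero padding accounts for the jumps of a step density at the two ends of its support. *)
Definition padded (N : nat) (g : nat -> R) (j : nat) : R :=
  match j with O => 0 | S i => if Compare_dec.lt_dec i N then g i else 0 end.

Lemma padded_ext N g g' j : (forall i, (i < N)%nat -> g i = g' i) -> padded N g j = padded N g' j.
Proof. intro H. destruct j as [|i]; simpl; [reflexivity|]. destruct Compare_dec.lt_dec; auto. Qed.

(** * Step functions *)

Definition step_fun (N : nat) (c g : nat -> R) (z : R) : R :=
  sum_lt N (fun i => g i * ychi (c i) (c (S i)) z).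

Lemma ychi_comp phi a b z :
  strictly_increasing phi -> ychi (phi a) (phi b) (phi z) = ychi a b z.
Proof.
  intro H. unfold ychi.
  destruct (Rle_dec a z) as [h1|h1]; destruct (Rle_dec (phi a) (phi z)) as [h2|h2].
  - destruct (Rlt_dec z b) as [h3|h3]; destruct (Rlt_dec (phi z) (phi b)) as [h4|h4];
      try reflexivity.
    + exfalso. apply h4, H, h3.
    + apply Rnot_lt_le, (strictly_increasing_le phi _ _ H) in h3. lra.
  - exfalso. apply h2, strictly_increasing_le; assumption.
  - apply Rnot_le_lt, H in h1. lra.
  - reflexivity.
Qed.

Lemma step_fun_comp N c c' g phi z :
  strictly_increasing phi -> (forall i, (i <= N)%nat -> phi (c i) = c' i) ->
  step_fun N c' g (phi z) = step_fun N c g z.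
Proof.
  intros Hphi Hc. apply sum_lt_ext. intros i Hi.
  rewrite <- !Hc by lia. rewrite ychi_comp by exact Hphi. reflexivity.
Qed.

(* The piecewise affine map sending [c i] to [c' i] for [i <= N], of slope 1
   outside [[c 0, c N]]. *)
Fixpoint pl_interp (c c' : nat -> R) (N : nat) (z : R) : R :=
  match N with
  | O => z - c O + c' O
  | S k => if Rle_dec z (c k) then pl_interp c c' k z
           else if Rle_dec z (c (S k))
                then c' k + (z - c k) * ((c' (S k) - c' k) / (c (S k) - c k))
                else c' (S k) + (z - c (S k))
  end.

Lemma increasing_nodes_pred N c : increasing_nodes (S N) c -> increasing_nodes N c.
Proof. intros H i Hi. apply H. lia. Qed.

Lemma pl_interp_nodes c c' N :
  increasing_nodes N c -> forall i, (i <= N)%nat -> pl_interp c c' N (c i) = c' i.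
Proof.
  induction N as [|k IH]; intros Hc i Hi; simpl.
  - replace i with O by lia. ring.
  - pose proof (Hc k ltac:(lia)). destruct (Nat.eq_dec i (S k)) as [->|hne].
    + destruct (Rle_dec (c (S k)) (c k)); [lra|].
      destruct (Rle_dec (c (S k)) (c (S k))); [field; lra|lra].
    + destruct (Rle_dec (c i) (c k)) as [_|h].
      * apply IH; [apply increasing_nodes_pred, Hc|lia].
      * exfalso. apply h, (increasing_nodes_le (S k)); [exact Hc|lia].
Qed.

Lemma pl_interp_increasing c c' N :
  increasing_nodes N c -> increasing_nodes N c' -> strictly_increasing (pl_interp c c' N).
Proof.
  induction N as [|k IH]; intros Hc Hc'; simpl.
  - intros a b h. lra.
  - pose proof (IH (increasing_nodes_pred _ _ Hc) (increasing_nodes_pred _ _ Hc')) as Hs.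
    pose proof (Hc k ltac:(lia)). pose proof (Hc' k ltac:(lia)).
    set (r := (c' (S k) - c' k) / (c (S k) - c k)).
    assert (hr : 0 < r) by (apply Rdiv_lt_0_compat; lra).
    assert (hr' : (c (S k) - c k) * r = c' (S k) - c' k) by (unfold r; field; lra).
    assert (Hlow : forall u, u <= c k -> pl_interp c c' k u <= c' k).
    { intros u hu. rewrite <- (pl_interp_nodes c c' k (increasing_nodes_pred _ _ Hc) k) by lia.
      apply strictly_increasing_le; assumption. }
    intros u w huw.
    destruct (Rle_dec u (c k)) as [u1|u1]; destruct (Rle_dec w (c k)) as [w1|w1].
    + apply Hs, huw.
    + pose proof (Hlow u u1). destruct (Rle_dec w (c (S k))); [|lra].
      assert (0 < (w - c k) * r) by (apply Rmult_lt_0_compat; lra). lra.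
    + lra.
    + destruct (Rle_dec u (c (S k))); destruct (Rle_dec w (c (S k))); try lra.
      * apply Rplus_lt_compat_l, Rmult_lt_compat_r; lra.
      * assert ((u - c k) * r <= (c (S k) - c k) * r) by (apply Rmult_le_compat_r; lra). lra.
Qed.

Lemma TV_step_fun_nodes N c c' g :
  increasing_nodes N c -> increasing_nodes N c' -> TV (step_fun N c g) = TV (step_fun N c' g).
Proof.
  intros Hc Hc'.
  apply (TV_eq_of_reparam _ _ (pl_interp c' c N) (pl_interp c c' N)).
  - apply pl_interp_increasing; assumption.
  - apply pl_interp_increasing; assumption.
  - intro z. apply step_fun_comp; [apply pl_interp_increasing; assumption|].
    apply pl_interp_nodes, Hc'.
  - intro z. apply step_fun_comp; [apply pl_interp_increasing; assumption|].
    apply pl_interp_nodes, Hc.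
Qed.

Fixpoint nodes_below (c : nat -> R) (k : nat) (z : R) : nat :=
  match k with
  | O => O
  | S k' => (nodes_below c k' z + if Rle_dec (c k') z then 1 else 0)%nat
  end.

Lemma nodes_below_mono c k z z' : z <= z' -> (nodes_below c k z <= nodes_below c k z')%nat.
Proof.
  intro hz. induction k as [|k IH]; simpl; [lia|].
  destruct (Rle_dec (c k) z); destruct (Rle_dec (c k) z'); lia || lra.
Qed.

Lemma nodes_below_spec N c z k : increasing_nodes N c -> (k <= S N)%nat ->
  (nodes_below c k z <= k)%nat /\
  forall i, (i < k)%nat -> (c i <= z <-> (i < nodes_below c k z)%nat).
Proof.
  intro Hc. induction k as [|k IH]; intro Hk; simpl; [split; [lia|intros; lia]|].
  destruct (IH ltac:(lia)) as [Hle Hiff].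
  destruct (Rle_dec (c k) z) as [h|h].
  - assert (Hall : forall i, (i < k)%nat -> (i < nodes_below c k z)%nat).
    { intros i Hi. apply (Hiff i Hi).
      pose proof (increasing_nodes_le N c i k Hc ltac:(lia)). lra. }
    assert (nodes_below c k z = k)
      by (destruct k as [|k']; [lia|pose proof (Hall k' ltac:(lia)); lia]).
    split; [lia|]. intros i Hi. split; [lia|intros _].
    destruct (Nat.eq_dec i k) as [->|]; [exact h|].
    pose proof (increasing_nodes_le N c i k Hc ltac:(lia)). lra.
  - split; [lia|]. intros i Hi. destruct (Nat.eq_dec i k) as [->|].
    + split; [contradiction|lia].
    + rewrite Nat.add_0_r. apply Hiff. lia.
Qed.

Lemma ychi_nodes c k j z : (c k <= z <-> (k < j)%nat) -> (c (S k) <= z <-> (S k < j)%nat) ->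
  ychi (c k) (c (S k)) z = if Nat.eq_dec j (S k) then 1 else 0.
Proof.
  intros Hk HSk. unfold ychi.
  destruct (Rle_dec (c k) z) as [h|h]; [destruct (Rlt_dec z (c (S k))) as [h'|h']|];
    destruct (Nat.eq_dec j (S k)); try reflexivity; exfalso.
  - assert (~ (S k < j)%nat) by (intro hj; apply HSk in hj; lra). apply Hk in h. lia.
  - apply Rnot_lt_le, HSk in h'. lia.
  - apply h, Hk. lia.
Qed.

Lemma sum_lt_indicator N g j :
  sum_lt N (fun k => g k * if Nat.eq_dec j (S k) then 1 else 0) = padded N g j.
Proof.
  induction N as [|N IH]; cbn [sum_lt].
  - destruct j as [|i]; unfold padded; [reflexivity|].
    destruct (Compare_dec.lt_dec i 0); [lia|reflexivity].
  - rewrite IH. unfold padded. destruct j as [|i].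
    + destruct (Nat.eq_dec 0 (S N)); [lia|ring].
    + destruct (Compare_dec.lt_dec i N); destruct (Compare_dec.lt_dec i (S N));
        destruct (Nat.eq_dec (S i) (S N)) as [e|e]; try lia.
      * ring.
      * injection e as ->. ring.
      * ring.
Qed.

Lemma step_fun_eq_padded N c g z : increasing_nodes N c ->
  step_fun N c g z = padded N g (nodes_below c (S N) z).
Proof.
  intro Hc. destruct (nodes_below_spec N c z (S N) Hc (le_n _)) as [_ Hiff].
  rewrite <- sum_lt_indicator. apply sum_lt_ext. intros k Hk.
  rewrite (ychi_nodes c k (nodes_below c (S N) z)); [reflexivity|apply Hiff; lia..].
Qed.

Lemma vsum_le_seq_var f w (m : nat -> nat) p k :
  (forall j, f (p j) = w (m j)) -> (forall j, (j < k)%nat -> (m j <= m (S j))%nat) ->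
  vsum f p k <= seq_var w (m k) - seq_var w (m O).
Proof.
  intros Hfw Hm. induction k as [|k IH]; simpl; [lra|].
  rewrite !Hfw. pose proof (seq_var_ge_dist w (m k) (m (S k)) (Hm k ltac:(lia))).
  specialize (IH ltac:(intros; apply Hm; lia)). lra.
Qed.

Lemma TV_step_fun_le N c g : increasing_nodes N c ->
  TV (step_fun N c g) <= seq_var (padded N g) (S N).
Proof.
  intro Hc. apply TV_le_of_var_sums_le. intros s [p [k [Hp ->]]].
  set (m := fun j => nodes_below c (S N) (p j)).
  assert (Hv : vsum (step_fun N c g) p k
               <= seq_var (padded N g) (m k) - seq_var (padded N g) (m O)).
  { apply vsum_le_seq_var.
    - intro j. apply step_fun_eq_padded, Hc.
    - intros j Hj. apply nodes_below_mono. left. apply Hp, Hj. }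
  pose proof (seq_var_le (padded N g) O (m O) ltac:(lia)) as Hm0.
  pose proof (seq_var_le (padded N g) (m k) (S N)
                (proj1 (nodes_below_spec N c (p k) (S N) Hc (le_n _)))).
  unfold seq_var at 1 in Hm0. simpl in Hm0. lra.
Qed.

(** * Riemann integrals of bounded compactly supported functions *)

Lemma RInt_eq_RiemannInt f a b (pr : Riemann_integrable f a b) : RInt f a b = RiemannInt pr.
Proof.
  unfold RInt. destruct (excluded_middle_informative _) as [H|H].
  - apply RiemannInt_P5.
  - exfalso. apply H. exists pr. exact I.
Qed.

Lemma Riemann_integrable_of_RInt_neq0 f a b : RInt f a b <> 0 -> Riemann_integrable f a b.
Proof.
  unfold RInt. destruct (excluded_middle_informative _) as [H|H]; [|contradiction].
  intros _. exact (proj1_sig (constructive_indefinite_description _ H)).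
Qed.

(* Approximate [f] by [0]; the error is the step function equal to [|f|] at the
   endpoints and to [0] inside, whose integral vanishes. *)
Lemma Riemann_integrable_of_zero_interior f c d :
  c <= d -> (forall z, c < z < d -> f z = 0) -> Riemann_integrable f c d.
Proof.
  intros hcd Hz eps.
  set (ps := fun z => if Req_EM_T z c then Rabs (f c) else if Req_EM_T z d then Rabs (f d) else 0).
  assert (Had : adapted_couple ps c d (cons c (cons d nil)) (cons 0 nil)).
  { unfold adapted_couple; repeat split.
    - intros i Hi. simpl in Hi. inversion Hi; [simpl; assumption|lia].
    - simpl; unfold Rmin; destruct (Rle_dec c d); [reflexivity|lra].
    - simpl; unfold Rmax; destruct (Rle_dec c d); [reflexivity|lra].
    - intros i Hi. simpl in Hi. inversion Hi; [|lia]. subst. intros z Hz'. simpl in Hz' |- *.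
      unfold open_interval in Hz'. unfold ps.
      destruct (Req_EM_T z c); [lra|]. destruct (Req_EM_T z d); [lra|reflexivity]. }
  exists (mkStepFun (StepFun_P4 c d 0)).
  exists (mkStepFun (existT _ (cons c (cons d nil)) (existT _ (cons 0 nil) Had))).
  split.
  - intros t Ht. simpl. unfold fct_cte. rewrite Rminus_0_r. unfold ps.
    unfold Rmin, Rmax in Ht. destruct (Rle_dec c d); [|lra].
    destruct (Req_EM_T t c) as [->|h1]; [lra|]. destruct (Req_EM_T t d) as [->|h2]; [lra|].
    rewrite Hz, Rabs_R0 by lra. lra.
  - unfold RiemannInt_SF. simpl. destruct (Rle_dec c d); simpl;
      rewrite ?Rmult_0_l, ?Rplus_0_r, ?Rabs_R0, ?Ropp_0, ?Rabs_R0; destruct eps; simpl; lra.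
Qed.

Lemma Riemann_integrable_of_support f a b :
  a <= b -> (forall z, z < a \/ b < z -> f z = 0) -> Riemann_integrable f a b ->
  forall p q, Riemann_integrable f p q.
Proof.
  intros hab Hz Hi.
  assert (Hpq : forall p q, p <= q -> Riemann_integrable f p q).
  { intros p q hpq.
    pose proof (Rmin_l p a). pose proof (Rmin_r p a).
    pose proof (Rmax_l q b). pose proof (Rmax_r q b).
    set (P := Rmin p a) in *. set (Q := Rmax q b) in *.
    assert (I1 : Riemann_integrable f P a)
      by (apply Riemann_integrable_of_zero_interior; [lra|intros; apply Hz; lra]).
    assert (I2 : Riemann_integrable f b Q)
      by (apply Riemann_integrable_of_zero_interior; [lra|intros; apply Hz; lra]).
    assert (I3 : Riemann_integrable f P q)
      by (apply (RiemannInt_P22 (RiemannInt_P24 (RiemannInt_P24 I1 Hi) I2)); lra).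
    apply (RiemannInt_P23 I3); lra. }
  intros p q. destruct (Rle_dec p q); [apply Hpq; lra|]. apply RiemannInt_P1, Hpq. lra.
Qed.

Section BoundedIntegrand.
Variables (rho : R -> R) (M : R).
Hypothesis rho_integrable : forall p q, Riemann_integrable rho p q.
Hypothesis rho_bounded : forall z, Rabs (rho z) <= M.

Lemma RInt_Chasles c x y : RInt rho c y = RInt rho c x + RInt rho x y.
Proof.
  rewrite !(RInt_eq_RiemannInt _ _ _ (rho_integrable _ _)). symmetry. apply RiemannInt_P26.
Qed.

Lemma RInt_bounds x y l u : x <= y -> (forall z, x < z < y -> l <= rho z <= u) ->
  l * (y - x) <= RInt rho x y <= u * (y - x).
Proof.
  intros h H. rewrite (RInt_eq_RiemannInt _ _ _ (rho_integrable x y)).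
  apply RiemannInt_const_bound; assumption.
Qed.

Lemma RInt_Lipschitz c x y : x <= y -> Rabs (RInt rho c y - RInt rho c x) <= M * (y - x).
Proof.
  intro h. rewrite (RInt_Chasles c x y).
  pose proof (RInt_bounds x y _ _ h (fun z _ => Rabs_le_bounds _ _ (rho_bounded z))).
  apply Rabs_le. lra.
Qed.

Lemma RInt_at_lub c s ell : is_lub (fun x => RInt rho c x < ell) s -> RInt rho c s = ell.
Proof.
  intros [Hu Hl].
  assert (HM0 : 0 <= M) by (pose proof (rho_bounded 0); pose proof (Rabs_pos (rho 0)); lra).
  apply Rle_antisym; apply Rnot_lt_le; intro h.
  - set (d := (RInt rho c s - ell) / (2 * (M + 1))).
    assert (hd : 0 < d) by (apply Rdiv_lt_0_compat; lra).
    assert (Hd : (M + 1) * d = (RInt rho c s - ell) / 2) by (unfold d; field; lra).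
    assert (Hub : is_upper_bound (fun x => RInt rho c x < ell) (s - d)).
    { intros y Hy. apply Rnot_lt_le. intro hy. pose proof (Hu y Hy).
      pose proof (Rabs_le_bounds _ _ (RInt_Lipschitz c y s ltac:(lra))). nra. }
    pose proof (Hl _ Hub). lra.
  - set (d := (ell - RInt rho c s) / (2 * (M + 1))).
    assert (hd : 0 < d) by (apply Rdiv_lt_0_compat; lra).
    assert (Hd : (M + 1) * d = (ell - RInt rho c s) / 2) by (unfold d; field; lra).
    assert (Hsd : RInt rho c (s + d) < ell).
    { pose proof (Rabs_le_bounds _ _ (RInt_Lipschitz c s (s + d) ltac:(lra))). nra. }
    pose proof (Hu _ Hsd). lra.
Qed.

Lemma mean_value_points c d eps : c < d -> 0 < eps ->
  let m := RInt rho c d / (d - c) in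
  (exists P, c < P < d /\ m - eps <= rho P) /\ (exists Q, c < Q < d /\ rho Q <= m + eps).
Proof.
  intros hcd he m.
  assert (Hm : m * (d - c) = RInt rho c d) by (unfold m; field; lra).
  assert (Hpos : 0 < eps * (d - c)) by (apply Rmult_lt_0_compat; lra).
  split; apply NNPP; intro Hnone.
  - assert (Hb : forall z, c < z < d -> - M <= rho z <= m - eps).
    { intros z hz. split; [exact (proj1 (Rabs_le_bounds _ _ (rho_bounded z)))|].
      apply Rnot_lt_le. intro. apply Hnone. exists z. split; [exact hz|lra]. }
    pose proof (RInt_bounds c d _ _ ltac:(lra) Hb). nra.
  - assert (Hb : forall z, c < z < d -> m + eps <= rho z <= M).
    { intros z hz. split; [|exact (proj2 (Rabs_le_bounds _ _ (rho_bounded z)))].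
      apply Rnot_lt_le. intro. apply Hnone. exists z. split; [exact hz|lra]. }
    pose proof (RInt_bounds c d _ _ ltac:(lra) Hb). nra.
Qed.

End BoundedIntegrand.

(** * Variation sums through points of each cell *)

Lemma vsum_ext f p q k : (forall j, (j <= k)%nat -> p j = q j) -> vsum f p k = vsum f q k.
Proof.
  induction k as [|k IH]; intro H; cbn [vsum]; [reflexivity|].
  rewrite IH, (H (S k)), (H k) by (lia || intros; apply H; lia). reflexivity.
Qed.

Lemma vsum_nondecreasing_dedup f k : forall p, (forall j, (j < k)%nat -> p j <= p (S j)) ->
  exists q k', (forall j, (j < k')%nat -> q j < q (S j)) /\ q k' = p k /\ vsum f q k' = vsum f p k.
Proof.
  induction k as [|k IH]; intros p Hp.
  - exists p, O. split; [intros; lia|split; reflexivity].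
  - destruct (IH p (fun j Hj => Hp j ltac:(lia))) as [q [k' [Hq [Hqk Hv]]]].
    destruct (Rle_lt_or_eq_dec _ _ (Hp k ltac:(lia))) as [hlt|heq].
    + exists (fun j => if Nat.eq_dec j (S k') then p (S k) else q j), (S k'). split; [|split].
      * intros j Hj. destruct (Nat.eq_dec j (S k')); [lia|].
        destruct (Nat.eq_dec (S j) (S k')) as [e|e].
        -- injection e as ->. rewrite Hqk. exact hlt.
        -- apply Hq. lia.
      * destruct (Nat.eq_dec (S k') (S k')); [reflexivity|lia].
      * cbn [vsum]. destruct (Nat.eq_dec (S k') (S k')); [|lia].
        destruct (Nat.eq_dec k' (S k')); [lia|]. rewrite Hqk, <- Hv. f_equal.
        apply vsum_ext. intros j Hj. destruct (Nat.eq_dec j (S k')); [lia|reflexivity].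
    + exists q, k'. split; [exact Hq|split; [rewrite Hqk; exact heq|]].
      cbn [vsum]. rewrite Hv, heq, Rminus_diag, Rabs_R0. ring.
Qed.

Lemma var_sums_of_nondecreasing f p k :
  (forall j, (j < k)%nat -> p j <= p (S j)) -> var_sums f (vsum f p k).
Proof.
  intro Hp. destruct (vsum_nondecreasing_dedup f k p Hp) as [q [k' [Hq [_ Hv]]]].
  exists q, k'. split; [exact Hq|symmetry; exact Hv].
Qed.

Definition between (u w y : R) : Prop := u <= y <= w \/ w <= y <= u.

Lemma between_path_le l h y A :
  between l h y -> Rabs (y - A) + Rabs (h - y) <= Rabs (l - A) + Rabs (h - l).
Proof. intros [H|H]; unfold Rabs; repeat destruct Rcase_abs; lra. Qed.

Lemma cell_witness f a b yv eps : 0 <= eps ->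
  (exists P, a < P < b /\ yv - eps <= f P) -> (exists Q, a < Q < b /\ f Q <= yv + eps) ->
  exists t : R * R * R, let '(lo, hi, yp) := t in
    a < lo <= hi /\ hi < b /\ between (f lo) (f hi) yp /\ Rabs (yp - yv) <= eps.
Proof.
  intros he [P [hP fP]] [Q [hQ fQ]].
  assert (Hyp : exists yp, between (f P) (f Q) yp /\ Rabs (yp - yv) <= eps).
  { destruct (Rle_dec (f Q) (f P)) as [h|h].
    - exists (Rmax (f Q) (Rmin (f P) yv)). split.
      + right. split; [apply Rmax_l|apply Rmax_lub; [exact h|apply Rmin_l]].
      + apply Rabs_le. unfold Rmax, Rmin. repeat destruct Rle_dec; split; lra.
    - exists (f P). split; [left; lra|apply Rabs_le; lra]. }
  destruct Hyp as [yp [Hb Hyp]]. destruct (Rle_dec P Q).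
  - exists (P, Q, yp). split; [lra|split; [lra|split; [exact Hb|exact Hyp]]].
  - exists (Q, P, yp). split; [lra|split; [lra|split; [|exact Hyp]]].
    destruct Hb; [right|left]; lra.
Qed.

(* The points [zL, lo 0, hi 0, lo 1, hi 1, ..., lo (N-1), hi (N-1), zR]. *)
Definition chain (N : nat) (zL zR : R) (lo hi : nat -> R) (j : nat) : R :=
  match j with
  | O => zL
  | S j' => if Compare_dec.lt_dec j' (2 * N)
            then (if Nat.even j' then lo (Nat.div2 j') else hi (Nat.div2 j'))
            else zR
  end.

Lemma chain_lo N zL zR lo hi i : (i < N)%nat -> chain N zL zR lo hi (S (2 * i)) = lo i.
Proof.
  intro H. unfold chain. destruct (Compare_dec.lt_dec (2 * i) (2 * N)); [|lia].
  rewrite Nat.even_even, Nat.div2_double. reflexivity.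
Qed.

Lemma chain_hi N zL zR lo hi i : (i < N)%nat -> chain N zL zR lo hi (S (S (2 * i))) = hi i.
Proof.
  intro H. unfold chain. destruct (Compare_dec.lt_dec (S (2 * i)) (2 * N)); [|lia].
  replace (S (2 * i)) with (2 * i + 1)%nat by lia.
  rewrite Nat.even_odd, Nat.add_1_r, Nat.div2_succ_double. reflexivity.
Qed.

Lemma chain_last N zL zR lo hi : chain N zL zR lo hi (S (2 * N)) = zR.
Proof. unfold chain. destruct (Compare_dec.lt_dec (2 * N) (2 * N)); [lia|reflexivity]. Qed.

Lemma chain_nondecreasing N zL zR lo hi X :
  zL < X O -> X N < zR -> (forall i, (i < N)%nat -> X i < lo i <= hi i /\ hi i < X (S i)) ->
  forall j, (j < S (2 * N))%nat -> chain N zL zR lo hi j <= chain N zL zR lo hi (S j).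
Proof.
  intros HL HR Hc j Hj. destruct j as [|j].
  - destruct N as [|N']; [simpl; lra|].
    change 1%nat with (S (2 * 0)). rewrite chain_lo by lia.
    simpl. pose proof (Hc O ltac:(lia)). lra.
  - destruct (Nat.Even_or_Odd j) as [[i ->]|[i ->]].
    + rewrite chain_lo, chain_hi by lia. apply (Hc i ltac:(lia)).
    + replace (S (2 * i + 1)) with (S (S (2 * i))) by lia. rewrite chain_hi by lia.
      pose proof (Hc i ltac:(lia)) as Hi.
      destruct (Compare_dec.lt_dec (S i) N) as [h|h].
      * replace (S (S (S (2 * i)))) with (S (2 * S i)) by lia. rewrite chain_lo by lia.
        pose proof (Hc (S i) h). lra.
      * replace (S (S (S (2 * i)))) with (S (2 * N)) by lia. rewrite chain_last.
        replace (S i) with N in Hi by lia. lra.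
Qed.

Lemma chain_var_ge f N zL zR lo hi yp : f zL = 0 -> f zR = 0 ->
  (forall i, (i < N)%nat -> between (f (lo i)) (f (hi i)) (yp i)) ->
  seq_var (padded N yp) (S N) <= seq_var (fun j => f (chain N zL zR lo hi j)) (S (2 * N)).
Proof.
  intros HL HR Hb. set (u := fun j => f (chain N zL zR lo hi j)). set (w := padded N yp).
  assert (Inv : forall i, (i <= N)%nat ->
            seq_var w i + Rabs (u (2 * i)%nat - w i) <= seq_var u (2 * i)).
  { induction i as [|i IH]; intro Hi.
    - unfold seq_var, u, w; simpl. rewrite HL, Rminus_diag, Rabs_R0. lra.
    - replace (2 * S i)%nat with (S (S (2 * i))) by lia. rewrite !seq_var_S.
      assert (E1 : u (S (2 * i)) = f (lo i)) by (unfold u; rewrite chain_lo by lia; reflexivity).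
      assert (E2 : u (S (S (2 * i))) = f (hi i))
        by (unfold u; rewrite chain_hi by lia; reflexivity).
      assert (E3 : w (S i) = yp i)
        by (unfold w, padded; destruct (Compare_dec.lt_dec i N); [reflexivity|lia]).
      rewrite E1, E2, E3.
      pose proof (between_path_le _ _ _ (u (2 * i)%nat) (Hb i ltac:(lia))).
      pose proof (Rabs_sub_triang (yp i) (u (2 * i)%nat) (w i)).
      specialize (IH ltac:(lia)). lra. }
  pose proof (Inv N (le_n N)) as HN. rewrite !seq_var_S.
  assert (Hu : u (S (2 * N)) = 0) by (unfold u; rewrite chain_last; exact HR).
  assert (Hw : w (S N) = 0)
    by (unfold w, padded; destruct (Compare_dec.lt_dec N N); [lia|reflexivity]).
  rewrite Hu, Hw. pose proof (Rabs_sub_triang 0 (u (2 * N)%nat) (w N)). lra.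
Qed.

Lemma vsum_eq_seq_var f p k : vsum f p k = seq_var (fun j => f (p j)) k.
Proof. induction k as [|k IH]; [reflexivity|]. cbn [vsum]. rewrite IH. reflexivity. Qed.

Lemma var_sums_ge_padded_var f N X y eps : 0 < eps ->
  (forall i, (i < N)%nat ->
     (exists P, X i < P < X (S i) /\ y i - eps <= f P) /\
     (exists Q, X i < Q < X (S i) /\ f Q <= y i + eps)) ->
  (exists zL, zL < X O /\ f zL = 0) -> (exists zR, X N < zR /\ f zR = 0) ->
  exists s, var_sums f s /\ seq_var (padded N y) (S N) - 2 * eps * INR (S N) <= s.
Proof.
  intros he Hpts [zL [hL fL]] [zR [hR fR]].
  destruct (choice (fun i (t : R * R * R) => (i < N)%nat -> let '(lo, hi, yp) := t in
      X i < lo <= hi /\ hi < X (S i) /\ between (f lo) (f hi) yp /\ Rabs (yp - y i) <= eps))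
    as [T HT].
  { intro i. destruct (Compare_dec.lt_dec i N) as [h|h]; [|exists (0, 0, 0); intro; lia].
    destruct (Hpts i h) as [HP HQ].
    destruct (cell_witness f _ _ _ eps ltac:(lra) HP HQ) as [t Ht]. exists t. intros _. exact Ht. }
  set (lo := fun i => fst (fst (T i))). set (hi := fun i => snd (fst (T i))).
  set (yp := fun i => snd (T i)).
  assert (HB : forall i, (i < N)%nat -> X i < lo i <= hi i /\ hi i < X (S i) /\
                 between (f (lo i)) (f (hi i)) (yp i) /\ Rabs (yp i - y i) <= eps).
  { intros i Hi. specialize (HT i Hi). unfold lo, hi, yp. destruct (T i) as [[l h] w]. exact HT. }
  exists (vsum f (chain N zL zR lo hi) (S (2 * N))). split.
  - apply var_sums_of_nondecreasing, (chain_nondecreasing N zL zR lo hi X); try lra.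
    intros i Hi. destruct (HB i Hi) as [h1 [h2 _]]. split; assumption.
  - rewrite vsum_eq_seq_var.
    pose proof (chain_var_ge f N zL zR lo hi yp fL fR
                  (fun i Hi => proj1 (proj2 (proj2 (HB i Hi))))).
    assert (Hpert : forall j, Rabs (padded N yp j - padded N y j) <= eps).
    { intros [|i]; unfold padded; [rewrite Rminus_diag, Rabs_R0; lra|].
      destruct (Compare_dec.lt_dec i N) as [h|h];
        [apply (HB i h)|rewrite Rminus_diag, Rabs_R0; lra]. }
    pose proof (seq_var_perturb (padded N y) (padded N yp) eps (S N) Hpert). lra.
Qed.

Lemma mean_var_le_TV rho M N X :
  (forall p q, Riemann_integrable rho p q) -> (forall z, Rabs (rho z) <= M) ->
  (exists a b, forall z, z < a \/ b < z -> rho z = 0) -> has_BV rho -> increasing_nodes N X ->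
  seq_var (padded N (fun i => RInt rho (X i) (X (S i)) / (X (S i) - X i))) (S N) <= TV rho.
Proof.
  intros Hint HM [a [b Hz]] HBV HX. apply le_epsilon. intros eps he.
  assert (HSN : 0 < INR (S N)) by (apply lt_0_INR; lia).
  set (e := eps / (2 * INR (S N))).
  assert (he' : 0 < e) by (apply Rdiv_lt_0_compat; lra).
  destruct (var_sums_ge_padded_var rho N X
              (fun i => RInt rho (X i) (X (S i)) / (X (S i) - X i)) e he') as [s [Hs Hle]].
  - intros i Hi. exact (mean_value_points rho M Hint HM _ _ e (HX i Hi) he').
  - exists (Rmin a (X O) - 1). pose proof (Rmin_l a (X O)). pose proof (Rmin_r a (X O)).
    split; [lra|apply Hz; lra].
  - exists (Rmax b (X N) + 1). pose proof (Rmax_l b (X N)). pose proof (Rmax_r b (X N)).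
    split; [lra|apply Hz; lra].
  - pose proof (var_sums_le_TV rho s HBV Hs).
    assert (2 * e * INR (S N) = eps) by (unfold e; field; lra). lra.
Qed.

(** * Dini derivatives and monotonicity *)

Definition cont_nonneg_at (f : R -> R) (t : R) : Prop := limit1_in f (fun s => 0 <= s) (f t) t.

Lemma cont_nonneg_atP f t : cont_nonneg_at f t ->
  forall eta, 0 < eta -> exists alp, 0 < alp /\
    forall s, 0 <= s -> Rabs (s - t) < alp -> Rabs (f s - f t) < eta.
Proof.
  intros H eta he. destruct (H eta he) as [alp [ha Ha]]. exists alp. split; [exact ha|].
  intros s hs1 hs2. exact (Ha s (conj hs1 hs2)).
Qed.

Lemma cont_nonneg_at_of_continuity_pt f t : continuity_pt f t -> cont_nonneg_at f t.
Proof.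
  intros H eta he. destruct (H eta he) as [alp [ha Ha]]. exists alp. split; [exact ha|].
  intros s [hs1 hs2]. destruct (Req_dec s t) as [->|hne].
  - simpl. unfold R_dist. rewrite Rminus_diag, Rabs_R0. exact he.
  - exact (Ha s (conj (conj I (not_eq_sym hne)) hs2)).
Qed.

Lemma cont_nonneg_at_Rabs f t : cont_nonneg_at f t -> cont_nonneg_at (fun s => Rabs (f s)) t.
Proof.
  intros H eta he. destruct (H eta he) as [alp [ha Ha]]. exists alp. split; [exact ha|].
  intros s hs. specialize (Ha s hs). simpl in *. unfold R_dist in *.
  pose proof (Rabs_triang_inv (f s) (f t)). pose proof (Rabs_triang_inv (f t) (f s)) as h.
  rewrite (Rabs_minus_sym (f t)) in h. unfold Rabs at 1. destruct Rcase_abs; lra.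
Qed.

Lemma cont_nonneg_at_sum (h : nat -> R -> R) t K :
  (forall r, (r < K)%nat -> cont_nonneg_at (h r) t) ->
  cont_nonneg_at (fun s => sum_lt K (fun r => h r s)) t.
Proof.
  induction K as [|K IH]; intro H; cbn [sum_lt].
  - exact (limit_free (fun _ => 0) _ t t).
  - apply limit_plus; [apply IH; intros; apply H; lia|apply H; lia].
Qed.

Definition right_dini_le (f : R -> R) (t r : R) : Prop :=
  forall eps, 0 < eps -> exists delta, 0 < delta /\
    forall s, t < s < t + delta -> f s <= f t + (r + eps) * (s - t).

Lemma right_dini_le_weaken f t r r' : r <= r' -> right_dini_le f t r -> right_dini_le f t r'.
Proof.
  intros hr H eps he. destruct (H eps he) as [d [hd Hd]]. exists d. split; [exact hd|].
  intros s hs. specialize (Hd s hs). nra.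
Qed.

Lemma right_dini_le_sum (h : nat -> R -> R) (a : nat -> R) t K :
  (forall r, (r < K)%nat -> right_dini_le (h r) t (a r)) ->
  right_dini_le (fun s => sum_lt K (fun r => h r s)) t (sum_lt K a).
Proof.
  induction K as [|K IH]; intros H eps he; cbn [sum_lt].
  - exists 1. split; [lra|]. intros s hs. nra.
  - destruct (IH (fun r Hr => H r ltac:(lia)) (eps / 2) ltac:(lra)) as [d1 [hd1 H1]].
    destruct (H K ltac:(lia) (eps / 2) ltac:(lra)) as [d2 [hd2 H2]].
    exists (Rmin d1 d2). split; [apply Rmin_pos; assumption|]. intros s hs.
    pose proof (Rmin_l d1 d2). pose proof (Rmin_r d1 d2).
    specialize (H1 s ltac:(lra)). specialize (H2 s ltac:(lra)). lra.
Qed.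

Lemma derivable_pt_lim_right_approx g t d : derivable_pt_lim g t d ->
  forall eps, 0 < eps -> exists delta, 0 < delta /\
    forall s, t < s < t + delta -> Rabs (g s - g t - d * (s - t)) <= eps * (s - t).
Proof.
  intros Hd eps he. destruct (Hd eps he) as [[d1 hd1] Hd1]. simpl in Hd1.
  exists d1. split; [exact hd1|].
  intros s hs. specialize (Hd1 (s - t) ltac:(lra) ltac:(rewrite Rabs_right; lra)).
  replace (t + (s - t)) with s in Hd1 by ring.
  replace (g s - g t - d * (s - t)) with (((g s - g t) / (s - t) - d) * (s - t)) by (field; lra).
  rewrite Rabs_mult, (Rabs_right (s - t)) by lra. apply Rmult_le_compat_r; lra.
Qed.

(* Right derivative of [|g|] at a point where [g] has value [g0] and derivative [d]. *)
Definition abs_right_deriv (g0 d : R) : R :=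
  if Rlt_dec 0 g0 then d else if Rlt_dec g0 0 then - d else Rabs d.

Lemma right_dini_le_Rabs_pos g t d : derivable_pt_lim g t d -> 0 < g t ->
  right_dini_le (fun s => Rabs (g s)) t d.
Proof.
  intros Hd hg eps he. destruct (derivable_pt_lim_right_approx g t d Hd eps he) as [d1 [hd1 H1]].
  assert (hk : 0 < Rabs d + eps + 1) by (pose proof (Rabs_pos d); lra).
  exists (Rmin d1 (g t / (Rabs d + eps + 1))).
  split; [apply Rmin_pos; [exact hd1|apply Rdiv_lt_0_compat; lra]|].
  intros s hs. pose proof (Rmin_l d1 (g t / (Rabs d + eps + 1))).
  pose proof (Rmin_r d1 (g t / (Rabs d + eps + 1))).
  assert (hsmall : (Rabs d + eps + 1) * (s - t) < g t).
  { apply (Rmult_lt_reg_r (/ (Rabs d + eps + 1))); [apply Rinv_0_lt_compat; lra|].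
    replace ((Rabs d + eps + 1) * (s - t) * / (Rabs d + eps + 1)) with (s - t) by (field; lra).
    unfold Rdiv in *. lra. }
  specialize (H1 s ltac:(lra)). apply Rabs_le_bounds in H1.
  pose proof (Rle_abs (- d)) as hnd. rewrite Rabs_Ropp in hnd.
  rewrite (Rabs_right (g t)), (Rabs_right (g s)) by nra. lra.
Qed.

Lemma right_dini_le_Rabs g t d : derivable_pt_lim g t d ->
  right_dini_le (fun s => Rabs (g s)) t (abs_right_deriv (g t) d).
Proof.
  intro Hd. unfold abs_right_deriv. destruct (Rlt_dec 0 (g t)) as [hp|hp].
  - exact (right_dini_le_Rabs_pos g t d Hd hp).
  - destruct (Rlt_dec (g t) 0) as [hn|hn].
    + pose proof (right_dini_le_Rabs_pos (fun s => - g s) t (- d)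
                    (derivable_pt_lim_opp g t d Hd) ltac:(lra)) as H.
      intros eps he. destruct (H eps he) as [d1 [hd1 H1]]. exists d1. split; [exact hd1|].
      intros s hs. specialize (H1 s hs). rewrite !Rabs_Ropp in H1. exact H1.
    + assert (hz : g t = 0) by lra. intros eps he.
      destruct (derivable_pt_lim_right_approx g t d Hd eps he) as [d1 [hd1 H1]].
      exists d1. split; [exact hd1|]. intros s hs. specialize (H1 s hs).
      rewrite hz, Rabs_R0 in *. rewrite Rminus_0_r in H1.
      pose proof (Rabs_sub_triang (g s) (d * (s - t)) 0) as h.
      rewrite !Rminus_0_r, Rabs_mult, (Rabs_right (s - t)) in h by lra. lra.
Qed.

Section RightDiniMonotone.
Variable f : R -> R.
Hypothesis f_cont : forall t, 0 <= t -> cont_nonneg_at f t.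
Hypothesis f_dini : forall t, 0 < t -> right_dini_le f t 0.

(* Continuity-induction on the set of [s] in [[0, T]] where the bound holds. *)
Lemma le_linear_of_right_dini T eps : 0 <= T -> 0 < eps -> f T <= f 0 + eps + eps * T.
Proof.
  intros hT he.
  set (E := fun s => 0 <= s <= T /\ f s <= f 0 + eps + eps * s).
  assert (E0 : E 0) by (split; lra).
  destruct (completeness E (ex_intro _ T (fun s Hs => proj2 (proj1 Hs))) (ex_intro _ 0 E0))
    as [c [Hu Hl]].
  assert (hc0 : 0 <= c) by (apply Hu, E0).
  assert (hcT : c <= T) by (apply Hl; intros s [hs _]; lra).
  assert (Ec : f c <= f 0 + eps + eps * c).
  { destruct (Rle_lt_or_eq_dec _ _ hc0) as [hcp|<-]; [|lra].
    apply Rnot_lt_le. intro Hbad.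
    destruct (cont_nonneg_atP f c (f_cont c hc0) (f c - (f 0 + eps + eps * c)) ltac:(lra))
      as [alp [ha Ha]].
    assert (Hex : exists s, E s /\ c - alp < s).
    { apply NNPP. intro Hn. assert (Hub : is_upper_bound E (c - alp)).
      { intros s Hs. apply Rnot_lt_le. intro. apply Hn. exists s. split; assumption. }
      pose proof (Hl _ Hub). lra. }
    destruct Hex as [s [[hs1 hs2] hs3]]. pose proof (Hu s (conj hs1 hs2)).
    specialize (Ha s ltac:(lra) ltac:(rewrite Rabs_left1; lra)). apply Rabs_def2 in Ha.
    assert (eps * s <= eps * c) by (apply Rmult_le_compat_l; lra). lra. }
  destruct (Rle_lt_or_eq_dec _ _ hcT) as [hlt|<-]; [exfalso|exact Ec].
  assert (Hright : exists s, c < s /\ E s).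
  { destruct (Rle_lt_or_eq_dec _ _ hc0) as [hcp|<-].
    - destruct (f_dini c hcp eps he) as [del [hdel Hdel]].
      exists (Rmin (c + del / 2) T). pose proof (Rmin_l (c + del / 2) T).
      pose proof (Rmin_r (c + del / 2) T).
      assert (c < Rmin (c + del / 2) T) by (apply Rmin_glb_lt; lra).
      specialize (Hdel (Rmin (c + del / 2) T) ltac:(lra)). split; [lra|split; [lra|nra]].
    - destruct (cont_nonneg_atP f 0 (f_cont 0 (Rle_refl 0)) eps he) as [alp [ha Ha]].
      exists (Rmin (alp / 2) T). pose proof (Rmin_l (alp / 2) T). pose proof (Rmin_r (alp / 2) T).
      assert (0 < Rmin (alp / 2) T) by (apply Rmin_glb_lt; lra).
      specialize (Ha (Rmin (alp / 2) T) ltac:(lra) ltac:(rewrite Rminus_0_r, Rabs_right; lra)).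
      apply Rabs_def2 in Ha. split; [lra|split; [lra|nra]]. }
  destruct Hright as [s [hs Es]]. pose proof (Hu s Es). lra.
Qed.

Lemma nonincreasing_of_right_dini T : 0 <= T -> f T <= f 0.
Proof.
  intro hT. apply le_epsilon. intros eps he.
  pose proof (le_linear_of_right_dini T (eps / (1 + T)) hT ltac:(apply Rdiv_lt_0_compat; lra))
    as HT.
  replace (f 0 + eps / (1 + T) + eps / (1 + T) * T) with (f 0 + eps) in HT by (field; lra).
  exact HT.
Qed.

End RightDiniMonotone.

Definition sgn (a : R) : R := if Rlt_dec 0 a then 1 else if Rlt_dec a 0 then -1 else 0.

Lemma sgn_bounds a : -1 <= sgn a <= 1.
Proof. unfold sgn. repeat destruct Rlt_dec; lra. Qed.

Lemma sum_abs_right_deriv_nonpos (g a : nat -> R) N :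
  a O = 0 -> a (S N) = 0 ->
  (forall k, (1 <= k <= N)%nat ->
     (0 < g k -> 0 <= a k) /\ (g k < 0 -> a k <= 0) /\ (g k = 0 -> a k = 0)) ->
  sum_lt (S N) (fun r => abs_right_deriv (g r) (a (S r) - a r)) <= 0.
Proof.
  intros Ha0 HaN Hsign.
  (* Summation by parts against a sign [sig r] of [g r] (of [g (S r)] where [g r = 0]). *)
  set (sig := fun r => if Req_EM_T (g r) 0 then sgn (g (S r)) else sgn (g r)).
  assert (Hsig : forall r, -1 <= sig r <= 1)
    by (intro r; unfold sig; destruct Req_EM_T; apply sgn_bounds).
  assert (Habs : forall k, (1 <= k <= S N)%nat -> Rabs (a k) = sgn (g k) * a k).
  { intros k Hk. destruct (Nat.eq_dec k (S N)) as [->|hk].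
    - rewrite HaN, Rabs_R0. ring.
    - destruct (Hsign k ltac:(lia)) as [Hp [Hn Hz]]. unfold sgn.
      destruct (Rlt_dec 0 (g k)) as [h|h]; [rewrite Rabs_right by (specialize (Hp h); lra); ring|].
      destruct (Rlt_dec (g k) 0) as [h'|h']; [rewrite Rabs_left1 by (apply Hn, h'); ring|].
      rewrite Hz, Rabs_R0 by lra. ring. }
  assert (Hterm : forall r, (r <= N)%nat ->
            abs_right_deriv (g r) (a (S r) - a r) = sig r * (a (S r) - a r)).
  { intros r Hr. unfold abs_right_deriv, sig. destruct (Req_EM_T (g r) 0) as [e|e].
    - destruct (Rlt_dec 0 (g r)); [lra|]. destruct (Rlt_dec (g r) 0); [lra|].
      assert (a r = 0) by (destruct r as [|r]; [exact Ha0|apply (Hsign (S r) ltac:(lia)), e]).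
      rewrite H, Rminus_0_r. apply Habs. lia.
    - unfold sgn. destruct (Rlt_dec 0 (g r)); [ring|]. destruct (Rlt_dec (g r) 0); [ring|lra]. }
  assert (Hstep : forall k, (1 <= k <= N)%nat -> a k * sig (k - 1)%nat <= a k * sig k).
  { intros k Hk. destruct (Hsign k Hk) as [Hp [Hn Hz]]. pose proof (Hsig (k - 1)%nat).
    unfold sig at 2. destruct (Req_EM_T (g k) 0) as [e|e]; [rewrite (Hz e); lra|].
    unfold sgn. destruct (Rlt_dec 0 (g k)) as [h|h]; [specialize (Hp h); nra|].
    destruct (Rlt_dec (g k) 0) as [h'|h']; [specialize (Hn h'); nra|lra]. }
  assert (Abel : forall m, (m <= N)%nat ->
            sum_lt (S m) (fun r => sig r * (a (S r) - a r)) <= sig m * a (S m)).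
  { induction m as [|m IH]; intro Hm; cbn [sum_lt].
    - rewrite Ha0. lra.
    - cbn [sum_lt] in IH. specialize (IH ltac:(lia)).
      pose proof (Hstep (S m) ltac:(lia)) as h. replace (S m - 1)%nat with m in h by lia. lra. }
  rewrite (sum_lt_ext _ _ (fun r => sig r * (a (S r) - a r))) by (intros; apply Hterm; lia).
  pose proof (Abel N (le_n N)) as h. rewrite HaN in h. lra.
Qed.

(** * The follow-the-leader flow *)

Definition density_var (ell : R) (N : nat) (x : nat -> R -> R) (t : R) : R :=
  seq_var (padded N (fun i => yi ell x i t)) (S N).

Section FollowTheLeader.
Variables (v : R -> R) (vmax ell : R) (N : nat) (xb : nat -> R) (x : nat -> R -> R).
Hypothesis v_decr : strictly_decreasing_nonneg v.
Hypothesis v_0 : v 0 = vmax.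
Hypothesis x_sol : FTL_solution v vmax ell N xb x.
Hypothesis ell_pos : 0 < ell.

Let y (j : nat) (t : R) : R := padded N (fun i => yi ell x i t) j.

Lemma gap_pos i t : (i < N)%nat -> 0 <= t -> 0 < x (S i) t - x i t.
Proof.
  intros Hi ht. destruct (x_sol i ltac:(lia)) as [_ [_ [_ H]]]. specialize (H Hi t ht). lra.
Qed.

Lemma y_nonneg j t : 0 <= t -> 0 <= y j t.
Proof.
  intro ht. unfold y, padded. destruct j as [|i]; [lra|].
  destruct (Compare_dec.lt_dec i N) as [h|]; [|lra].
  left. apply Rdiv_lt_0_compat; [exact ell_pos|apply gap_pos; assumption].
Qed.

Definition velocity (i : nat) (t : R) : R :=
  if Nat.eq_dec i N then vmax else v (ell / (x (S i) t - x i t)).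

Definition y_deriv (j : nat) (t : R) : R :=
  match j with
  | O => 0
  | S i => if Compare_dec.lt_dec i N
           then ell * (velocity i t - velocity (S i) t) / (x (S i) t - x i t)²
           else 0
  end.

Lemma y_derivable j t : 0 < t -> derivable_pt_lim (y j) t (y_deriv j t).
Proof.
  intro ht. destruct j as [|i]; [apply derivable_pt_lim_const|].
  unfold y, y_deriv, padded. destruct (Compare_dec.lt_dec i N) as [h|h];
    [|apply derivable_pt_lim_const].
  destruct (x_sol (S i) ltac:(lia)) as [_ [_ [H1 _]]].
  destruct (x_sol i ltac:(lia)) as [_ [_ [H2 _]]].
  pose proof (gap_pos i t h ltac:(lra)).
  pose proof (derivable_pt_lim_div (fct_cte ell) (x (S i) - x i)%F t 0 _
    (derivable_pt_lim_const ell t) (derivable_pt_lim_minus _ _ t _ _ (H1 t ht) (H2 t ht))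
    ltac:(unfold minus_fct; lra)) as HD.
  replace (ell * (velocity i t - velocity (S i) t)) with
          (0 * (x (S i) t - x i t) - (velocity (S i) t - velocity i t) * ell) by ring.
  exact HD.
Qed.

(* If [y_(i+1) > y_i] the leader [i+1] is slower than [i], so the gap shrinks and [y_i] grows. *)
Lemma y_deriv_sign k t : (1 <= k <= N)%nat -> 0 <= t ->
  (0 < y (S k) t - y k t -> 0 <= y_deriv k t) /\ (y (S k) t - y k t < 0 -> y_deriv k t <= 0) /\
  (y (S k) t - y k t = 0 -> y_deriv k t = 0).
Proof.
  intros Hk ht. destruct k as [|i]; [lia|].
  assert (Hi : velocity i t = v (y (S i) t)).
  { unfold velocity, y, padded. destruct (Nat.eq_dec i N); [lia|].
    destruct (Compare_dec.lt_dec i N); [reflexivity|lia]. }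
  assert (Hsi : velocity (S i) t = v (y (S (S i)) t)).
  { unfold velocity, y, padded. destruct (Nat.eq_dec (S i) N);
      destruct (Compare_dec.lt_dec (S i) N); try lia; [rewrite v_0|]; reflexivity. }
  pose proof (gap_pos i t ltac:(lia) ht).
  assert (Hc : 0 < ell / (x (S i) t - x i t)²)
    by (apply Rdiv_lt_0_compat; [exact ell_pos|unfold Rsqr; nra]).
  assert (E : y_deriv (S i) t = ell / (x (S i) t - x i t)² * (v (y (S i) t) - v (y (S (S i)) t))).
  { unfold y_deriv. destruct (Compare_dec.lt_dec i N); [|lia]. rewrite Hi, Hsi.
    unfold Rsqr. field. lra. }
  rewrite E. pose proof (y_nonneg (S i) t ht) as h1. pose proof (y_nonneg (S (S i)) t ht) as h2.
  split; [|split]; intro hg.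
  - pose proof (v_decr (y (S i) t) (y (S (S i)) t) h1 ltac:(lra)). nra.
  - pose proof (v_decr (y (S (S i)) t) (y (S i) t) h2 ltac:(lra)). nra.
  - replace (y (S (S i)) t) with (y (S i) t) by lra. ring.
Qed.

Lemma density_var_right_dini t : 0 < t -> right_dini_le (density_var ell N x) t 0.
Proof.
  intro ht.
  apply (right_dini_le_weaken _ _
    (sum_lt (S N) (fun r => abs_right_deriv (y (S r) t - y r t) (y_deriv (S r) t - y_deriv r t)))).
  - apply (sum_abs_right_deriv_nonpos (fun r => y (S r) t - y r t) (fun j => y_deriv j t)).
    + reflexivity.
    + unfold y_deriv. destruct (Compare_dec.lt_dec N N); [lia|reflexivity].
    + intros k Hk. apply y_deriv_sign; lra || lia.
  - apply (right_dini_le_sum (fun r s => Rabs (y (S r) s - y r s))).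
    intros r _. apply (right_dini_le_Rabs (fun s => y (S r) s - y r s)).
    apply derivable_pt_lim_minus; apply y_derivable, ht.
Qed.

Lemma x_cont i t : (i <= N)%nat -> 0 <= t -> cont_nonneg_at (x i) t.
Proof.
  intros Hi ht. destruct (x_sol i Hi) as [_ [H0 [Hd _]]].
  destruct (Rle_lt_or_eq_dec _ _ ht) as [hp|<-].
  - apply cont_nonneg_at_of_continuity_pt, derivable_continuous_pt. eexists. apply Hd, hp.
  - intros eta he. destruct (H0 eta he) as [d [hd Hd0]]. exists d. split; [exact hd|].
    intros s [hs1 hs2]. simpl in *. unfold R_dist in *. rewrite Rminus_0_r in hs2.
    apply Hd0. rewrite Rabs_right in hs2 by lra. lra.
Qed.

Lemma density_var_cont t : 0 <= t -> cont_nonneg_at (density_var ell N x) t.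
Proof.
  intro ht. apply (cont_nonneg_at_sum (fun r s => Rabs (y (S r) s - y r s))).
  intros r _. apply cont_nonneg_at_Rabs.
  assert (Hy : forall j, cont_nonneg_at (y j) t).
  { intros [|i]; unfold y, padded; [exact (limit_free (fun _ => 0) _ t t)|].
    destruct (Compare_dec.lt_dec i N) as [h|h]; [|exact (limit_free (fun _ => 0) _ t t)].
    apply (limit_mul (fun _ => ell)); [exact (limit_free (fun _ => ell) _ t t)|].
    apply limit_inv; [apply limit_minus; apply x_cont; lia || exact ht|].
    pose proof (gap_pos i t h ht). lra. }
  apply limit_minus; apply Hy.
Qed.

Lemma density_var_nonincreasing T : 0 <= T -> density_var ell N x T <= density_var ell N x 0.
Proof.
  apply nonincreasing_of_right_dini; [exact density_var_cont|exact density_var_right_dini].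
Qed.

End FollowTheLeader.

Lemma density_var_init_le_TV v vmax rho M ell N xb x :
  (forall p q, Riemann_integrable rho p q) -> (forall z, Rabs (rho z) <= M) ->
  (exists a b, forall z, z < a \/ b < z -> rho z = 0) -> has_BV rho ->
  initial_points rho ell N xb -> FTL_solution v vmax ell N xb x ->
  density_var ell N x 0 <= TV rho.
Proof.
  intros Hint HM Hsupp HBV [_ Hlub] Hsol.
  assert (Hx0 : forall i, (i <= N)%nat -> x i 0 = xb i) by (intros i Hi; apply (Hsol i Hi)).
  assert (Hnodes : increasing_nodes N xb).
  { intros i Hi. rewrite <- !Hx0 by lia. apply (Hsol i ltac:(lia)); [exact Hi|lra]. }
  assert (Hmass : forall i, (i < N)%nat -> RInt rho (xb i) (xb (S i)) = ell).
  { intros i Hi. apply (RInt_at_lub rho M Hint HM). specialize (Hlub (S i) ltac:(lia)).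
    replace (S i - 1)%nat with i in Hlub by lia. exact Hlub. }
  unfold density_var.
  replace (padded N (fun i => yi ell x i 0))
    with (padded N (fun i => RInt rho (xb i) (xb (S i)) / (xb (S i) - xb i))).
  - exact (mean_var_le_TV rho M N xb Hint HM Hsupp HBV Hnodes).
  - extensionality j. apply padded_ext. intros i Hi.
    unfold yi. rewrite Hmass, !Hx0 by lia. reflexivity.
Qed.

Theorem proposition3p8 (v : R -> R) (vmax L : R) (rho : R -> R) :
  (* (V1), (V2) *)
  C1_nonneg v -> strictly_decreasing_nonneg v -> v 0 = vmax ->
  (* (InBV): rho in M_L, L^oo, BV *)
  0 < L ->
  (forall z, 0 <= rho z) ->
  (exists a b, a <= b /\ (forall z, z < a \/ b < z -> rho z = 0) /\ RInt rho a b = L) ->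
  (exists M, forall z, Rabs (rho z) <= M) ->
  has_BV rho ->
  forall (n : nat) (xb : nat -> R) (x : nat -> R -> R),
    initial_points rho (elln L n) (Nn n) xb ->
    FTL_solution v vmax (elln L n) (Nn n) xb x ->
    forall t, 0 <= t ->
      TV (rho_hat (elln L n) (Nn n) x t) = TV (rho_check (elln L n) (Nn n) x t) /\
      TV (rho_check (elln L n) (Nn n) x t) <= TV rho.
Proof.
  intros _ Hv Hv0 HL _ [a [b [hab [Hz HI]]]] [M HM] HBV n xb x Hinit Hsol t ht.
  set (N := Nn n) in *. set (ell := elln L n) in *.
  assert (Hell : 0 < ell) by (apply Rdiv_lt_0_compat; [exact HL|apply pow_lt; lra]).
  assert (Hint : forall p q, Riemann_integrable rho p q).
  { apply (Riemann_integrable_of_support rho a b hab Hz), Riemann_integrable_of_RInt_neq0. lra. }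
  assert (Hx : increasing_nodes N (fun i => x i t))
    by (intros i Hi; apply (Hsol i ltac:(lia)); assumption).
  assert (Hgrid : increasing_nodes N (fun i => INR i * ell)) by (intros i _; rewrite S_INR; lra).
  split.
  - exact (TV_step_fun_nodes N _ _ (fun i => yi ell x i t) Hx Hgrid).
  - apply (Rle_trans _ _ _ (TV_step_fun_le N _ (fun i => yi ell x i t) Hgrid)).
    apply (Rle_trans _ (density_var ell N x 0)).
    + exact (density_var_nonincreasing v vmax ell N xb x Hv Hv0 Hsol Hell t ht).
    + apply (density_var_init_le_TV v vmax rho M ell N xb x); try assumption.
      exists a, b. exact Hz.
Qed.
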